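(* Let $m\ge3$ be an integer and let $\mathbf{C}$ be a binary linear $[2^{2m-2}+2^{m-1}-1,\ 2m-1]$ code whose set of nonzero weights is $\{2^{2m-3},\,2^{2m-3}+2^{m-2},\,2^{2m-3}+2^{m-1}\}$. Then the code $\mathbf{C}'$ obtained from $\mathbf{C}$ by the extension construction is a minimal binary linear $[3\cdot2^{2m-3}-1,\ 2m-1,\ 2^{2m-3}]_2$ code with maximum weight $2^{2m-2}$ which violates the Ashikhmin–Barg condition. Moreover, when $m\ge4$, $\mathbf{C}'$ is self-orthogonal.
   Context: Extension construction for a binary $[N,K]$ code $\mathbf{D}$, $K\ge2$, with minimum nonzero weight $w_{min}$, maximum weight $w_{max}$ and $n'=2w_{min}-w_{max}\ge1$: choose a basis $\mathbf{r}_1,\dots,\mathbf{r}_K$ with $wt(\mathbf{r}_1)=w_{max}$, $wt(\mathbf{r}_2)=w_{min}$; the extended code is generated by $(\mathbf{1},\mathbf{r}_1),(\mathbf{0},\mathbf{r}_2),\dots,(\mathbf{0},\mathbf{r}_K)$ in $\mathbf{F}_2^{n'+N}$, with $\mathbf{1},\mathbf{0}\in\mathbf{F}_2^{n'}$. Self-orthogonal: $\mathbf{C}\subseteq\mathbf{C}^\perp$. Minimal code: nonzero codewords with nested supports are equal. Ashikhmin–Barg condition (binary): $w_{min}/w_{max}>1/2$. *)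

From HB Require Import structures.
From mathcomp Require Import all_boot all_order all_algebra.
Set Implicit Arguments. Unset Strict Implicit. Unset Printing Implicit Defensive.
Import GRing.Theory.
Local Open Scope ring_scope.

Notation bvec n := 'rV['F_2]_n.
Notation bcode n := {vspace 'rV['F_2]_n}.

Definition wt n (v : bvec n) : nat := #|[pred i : 'I_n | v 0 i != 0]|.

Definition supp n (v : bvec n) : {set 'I_n} := [set i | v 0 i != 0].

Definition wmin n (C : bcode n) : nat :=
  \big[minn/n]_(v : bvec n | (v \in C) && (v != 0)) wt v.
Definition wmax n (C : bcode n) : nat := \max_(v : bvec n | v \in C) wt v.

Definition dotp n (u v : bvec n) : 'F_2 := \sum_(i < n) u 0 i * v 0 i.

Definition self_orthogonal n (C : bcode n) : Prop :=
  forall u v, u \in C -> v \in C -> dotp u v = 0.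

Definition minimal_code n (C : bcode n) : Prop :=
  forall u v, u \in C -> v \in C -> u != 0 -> v != 0 ->
    supp u \subset supp v -> u = v.

Definition ashikhmin_barg n (C : bcode n) : Prop :=
  (1 / 2 : rat) < (wmin C)%:R / (wmax C)%:R.

(* Extension construction: given a basis r = [:: r_1; r_2; ...; r_K] of D
   (with wt r_1 = wmax, wt r_2 = wmin, imposed separately), the extended code
   is spanned by (1, r_1), (0, r_2), ..., (0, r_K) in F_2^(n' + N). *)
Definition ext_gens n' N (r : seq (bvec N)) : seq (bvec (n' + N)) :=
  match r with
  | [::] => [::]
  | r1 :: rs => row_mx (const_mx 1) r1 :: map (row_mx 0) rs
  end.

Definition ext_code n' N (r : seq (bvec N)) : bcode (n' + N) :=
  <<ext_gens n' r>>%VS.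

(* A nonzero codeword of the extended code C' is (0, c) or (1, c) with c a
   nonzero codeword of C, so its weight lies between wmin(C) and
   n' + wmax(C) = 2 wmin(C); both bounds are attained by (0, r_2) and (1, r_1).
   Hence wmax(C') = 2 wmin(C'), which is exactly the failure of the
   Ashikhmin-Barg condition.  If supp u is properly contained in supp v, then u
   and v - u are nonzero codewords whose weights add up to wt v <= 2 wmin, so
   both have weight wmin and therefore zero head; then v = (0, c) has weight at
   most wmax(C) < 2 wmin(C), a contradiction.  For m >= 4 the length n' and all
   weights of C are multiples of 4, so C' is doubly even, hence self-orthogonal. *)

From HB Require Import structures.
From mathcomp Require Import all_boot all_order all_algebra.
From mathcomp Require Import zify.
Set Implicit Arguments. Unset Strict Implicit. Unset Printing Implicit Defensive.
Import GRing.Theory Num.Theory Order.TTheory.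
Local Open Scope ring_scope.

Lemma F2_cases (x : 'F_2) : x = 0 \/ x = 1.
Proof. by case: x => [[|[|//]]] x_lt2; [left | right]; apply: val_inj. Qed.

Lemma wtE n (v : bvec n) : wt v = #|supp v|.
Proof. by rewrite /wt /supp cardsE. Qed.

Lemma wt_le n (v : bvec n) : (wt v <= n)%N.
Proof. by rewrite /wt; apply: leq_trans (max_card _) _; rewrite card_ord. Qed.

Lemma wt0 n : wt (0 : bvec n) = 0%N.
Proof. by apply: eq_card0 => i; rewrite inE mxE eqxx. Qed.

Lemma wt_const1 n : wt (const_mx 1 : bvec n) = n.
Proof. by rewrite /wt -[RHS]card_ord; apply: eq_card => i; rewrite inE mxE. Qed.

Lemma wt_row_mx n1 n2 (u : bvec n1) (v : bvec n2) :
  wt (row_mx u v) = (wt u + wt v)%N.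
Proof.
rewrite /wt -!sum1_card big_split_ord /=.
by congr (_ + _)%N; apply: eq_bigl => i; rewrite !inE ?row_mxEl ?row_mxEr.
Qed.

Lemma suppN n (v : bvec n) : supp (- v) = supp v.
Proof. by apply/setP => i; rewrite !inE mxE oppr_eq0. Qed.

Lemma suppD n (u v : bvec n) :
  supp (u + v) = (supp u :|: supp v) :\: (supp u :&: supp v).
Proof.
apply/setP => i; rewrite !inE mxE.
by case: (F2_cases (u 0 i)) => ->; case: (F2_cases (v 0 i)) => ->.
Qed.

Lemma wtD n (u v : bvec n) :
  (wt u + wt v = wt (u + v) + 2 * #|supp u :&: supp v|)%N.
Proof.
rewrite !wtE suppD cardsDS; last exact: subset_trans (subsetIl _ _) (subsetUl _ _).
have := subset_leq_card (subsetIl (supp u) (supp v)).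
have := subset_leq_card (subsetIr (supp u) (supp v)).
rewrite cardsU; lia.
Qed.

Lemma wtB_subset n (u v : bvec n) :
  supp u \subset supp v -> wt (v - u) = (wt v - wt u)%N.
Proof.
move=> /setIidPr supp_uv; have := wtD v (- u).
by rewrite suppN supp_uv !wtE suppN; lia.
Qed.

Lemma dotpE n (u v : bvec n) : dotp u v = #|supp u :&: supp v|%:R.
Proof.
rewrite /dotp -sum1_card natr_sum [RHS]big_mkcond /=; apply: eq_bigr => i _.
rewrite !inE.
by case: (F2_cases (u 0 i)) => ->; case: (F2_cases (v 0 i)) => ->;
  rewrite ?mul0r ?mulr0 ?mulr1.
Qed.

Lemma doubly_even_self_orthogonal n (C : bcode n) :
  (forall v, v \in C -> (4 %| wt v)%N) -> self_orthogonal C.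
Proof.
move=> C4 u v Cu Cv; rewrite dotpE.
have : (2 * 2 %| 2 * #|supp u :&: supp v|)%N.
  by rewrite -(dvdn_addl _ (C4 _ (memvD Cu Cv))) addnC -wtD dvdn_add ?C4.
rewrite dvdn_pmul2l // => /dvdnP [k ->].
by rewrite natrM (pchar_Fp_0 (isT : prime 2)) mulr0.
Qed.

Lemma wmin_eq n (C : bcode n) (v : bvec n) :
  v \in C -> v != 0 -> (forall u, u \in C -> u != 0 -> (wt v <= wt u)%N) ->
  wmin C = wt v.
Proof.
move=> Cv v_nz v_min; rewrite /wmin -Order.NatOrder.minEnat.
apply/eqP; rewrite eqn_leq; apply/andP; split.
  by apply: (@bigmin_le_cond _ nat); rewrite Cv.
apply/(@bigmin_geP _ nat); split; first exact: wt_le.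
by move=> u /andP [Cu u_nz]; apply: v_min.
Qed.

Lemma wmax_eq n (C : bcode n) (v : bvec n) :
  v \in C -> (forall u, u \in C -> (wt u <= wt v)%N) -> wmax C = wt v.
Proof.
move=> Cv v_max; apply/eqP; rewrite eqn_leq (leq_bigmax_cond _ Cv) andbT.
exact/bigmax_leqP.
Qed.

Lemma not_ashikhmin_barg_wmax_double n (C : bcode n) :
  wmax C = (2 * wmin C)%N -> ~ ashikhmin_barg C.
Proof.
rewrite /ashikhmin_barg => ->; apply/negP; rewrite -leNgt.
have [->|w_nz] := eqVneq (wmin C) 0%N; first by rewrite mul0r.
by rewrite natrM invfM mulrCA mulfV ?mulr1 ?div1r // pnatr_eq0.
Qed.

Lemma mem_span_row0 n' N (rs : seq (bvec N)) (y : bvec (n' + N)) :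
  y \in <<map (row_mx 0) rs>>%VS -> exists2 c, c \in <<rs>>%VS & y = row_mx 0 c.
Proof.
elim: rs y => [|x rs IH] y /=.
  by rewrite span_nil memv0 => /eqP ->; exists 0; rewrite ?mem0v ?row_mx0.
rewrite span_cons => /memv_addP [_ /vlineP [k ->]] [_ /IH [c rs_c ->] ->].
exists (k *: x + c); first by rewrite span_cons memv_add ?memvZ ?memv_line.
by rewrite scale_row_mx add_row_mx scaler0 addr0.
Qed.

Lemma free_map_row0 n' N (rs : seq (bvec N)) :
  free rs -> free (map (row_mx (0 : bvec n')) rs).
Proof.
elim: rs => [|x rs IH] /=; first by move=> _; apply: nil_free.
rewrite !free_cons => /andP [rs'x free_rs]; rewrite IH // andbT.
by apply: contra rs'x => /mem_span_row0 [c rs_c /eq_row_mx [_ ->]].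
Qed.

Lemma free_ext_gens n' N (r1 : bvec N) rs :
  (0 < n')%N -> free (r1 :: rs) -> free (ext_gens n' (r1 :: rs)).
Proof.
move=> n'_gt0; rewrite /= !free_cons => /andP [_ free_rs].
rewrite free_map_row0 // andbT.
apply/negP => /mem_span_row0 [c _] /eq_row_mx [/matrixP head0 _].
by move: (head0 0 (Ordinal n'_gt0)); rewrite !mxE.
Qed.

Lemma mem_ext_code n' N (r1 : bvec N) rs x :
  x \in ext_code n' (r1 :: rs) ->
  exists k, exists2 c, c \in <<rs>>%VS & x = row_mx (k *: const_mx 1) (k *: r1 + c).
Proof.
rewrite /ext_code /= span_cons.
move=> /memv_addP [_ /vlineP [k ->]] [_ /mem_span_row0 [c rs_c ->] ->].
by exists k, c; rewrite // scale_row_mx add_row_mx addr0.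
Qed.

Section ExtensionConstruction.

Variables (n' N : nat) (C : bcode N) (r1 r2 : bvec N) (rs : seq (bvec N)).
Hypothesis r_basis : basis_of C [:: r1, r2 & rs].
Hypothesis wt_range :
  forall c, c \in C -> c != 0 -> (wt r2 <= wt c <= wt r1)%N.
Hypothesis n'_gt0 : (0 < n')%N.
Hypothesis n'E : (n' + wt r1 = 2 * wt r2)%N.

Local Notation C' := (ext_code n' [:: r1, r2 & rs]).

Let C_span : <<[:: r1, r2 & rs]>>%VS = C := span_basis r_basis.

Let r2_nz : r2 != 0.
Proof. by apply: (free_not0 (basis_free r_basis)); rewrite !inE eqxx orbT. Qed.

Lemma dim_ext_code : \dim C' = \dim C.
Proof.
rewrite -C_span (eqP (basis_free r_basis)).
by rewrite (eqP (free_ext_gens n'_gt0 (basis_free r_basis))) /= size_map.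
Qed.

Lemma ext_code_cases x : x \in C' -> x != 0 ->
  exists2 c, (c \in C) && (c != 0) &
    x = row_mx 0 c \/ x = row_mx (const_mx 1) c.
Proof.
move=> /mem_ext_code [k [c rs_c ->]] x_nz.
have C_c : c \in C by rewrite -C_span span_cons -[c]add0r memv_add ?mem0v.
case: (F2_cases k) x_nz => -> x_nz.
  exists c; last by left; rewrite !scale0r add0r.
  by rewrite C_c; apply: contraNneq x_nz => ->; rewrite !scale0r add0r row_mx0.
exists (r1 + c); last by right; rewrite !scale1r.
have C_r1 : r1 \in C by rewrite -C_span memv_span ?mem_head.
rewrite memvD //=; apply: contraTneq (basis_free r_basis) => r1_c0.
have -> : r1 = - c by apply/eqP; rewrite -addr_eq0 r1_c0.
by rewrite free_cons memvN rs_c.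
Qed.

Lemma wt_ext_code_bounds x : x \in C' -> x != 0 ->
  (wt r2 <= wt x <= 2 * wt r2)%N.
Proof.
move=> C'x x_nz; have [c /andP [C_c c_nz] [->|->]] := ext_code_cases C'x x_nz;
  by rewrite wt_row_mx ?wt0 ?wt_const1; have := wt_range C_c c_nz; lia.
Qed.

Lemma ext_code_wt_min x : x \in C' -> x != 0 -> wt x = wt r2 ->
  exists2 c, c \in C & x = row_mx 0 c.
Proof.
move=> C'x x_nz; have [c /andP [C_c c_nz] [->|->]] := ext_code_cases C'x x_nz.
  by exists c.
by rewrite wt_row_mx wt_const1; have := wt_range C_c c_nz; lia.
Qed.

Lemma wmin_ext_code : wmin C' = wt r2.
Proof.
have C'_r2 : row_mx 0 r2 \in C' by rewrite memv_span // !inE eqxx orbT.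
rewrite (@wmin_eq _ _ (row_mx 0 r2)) ?wt_row_mx ?wt0 //.
  by rewrite row_mx_eq0 negb_and r2_nz orbT.
by move=> u C'u u_nz; have := wt_ext_code_bounds C'u u_nz; lia.
Qed.

Lemma wmax_ext_code : wmax C' = (2 * wt r2)%N.
Proof.
have C'_r1 : row_mx (const_mx 1) r1 \in C' by rewrite memv_span ?mem_head.
rewrite (@wmax_eq _ _ (row_mx (const_mx 1) r1)) ?wt_row_mx ?wt_const1 //.
move=> u C'u; have [->|u_nz] := eqVneq u 0; first by rewrite wt0.
by have := wt_ext_code_bounds C'u u_nz; lia.
Qed.

Lemma minimal_ext_code : minimal_code C'.
Proof.
move=> u v C'u C'v u_nz v_nz supp_uv; apply/eqP/contraT => u_neq_v.
have C'_vu : v - u \in C' by rewrite memvB.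
have vu_nz : v - u != 0 by rewrite subr_eq0 eq_sym.
have [wt_u wt_vu wt_v] :
    [/\ wt u = wt r2, wt (v - u) = wt r2 & wt v = (2 * wt r2)%N].
  have wt_uv : (wt u <= wt v)%N by rewrite !wtE subset_leq_card.
  have := wt_ext_code_bounds C'u u_nz; have := wt_ext_code_bounds C'v v_nz.
  have := wt_ext_code_bounds C'_vu vu_nz; rewrite wtB_subset //.
  by move: wt_uv; clear => *; split; lia.
have [cu C_cu Eu] := ext_code_wt_min C'u u_nz wt_u.
have [cw C_cw Ew] := ext_code_wt_min C'_vu vu_nz wt_vu.
have Ev : v = row_mx 0 (cw + cu) by rewrite -[v](subrK u) Ew Eu add_row_mx addr0.
have [c0|c_nz] := eqVneq (cw + cu) 0.
  by move: v_nz; rewrite Ev c0 row_mx0 eqxx.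
have := wt_range (memvD C_cw C_cu) c_nz; move: wt_v n'E n'_gt0.
by rewrite Ev wt_row_mx wt0; clear; lia.
Qed.

Lemma self_orthogonal_ext_code :
  (4 %| n')%N -> (forall c, c \in C -> (4 %| wt c)%N) -> self_orthogonal C'.
Proof.
move=> n'4 C4; apply: doubly_even_self_orthogonal => x C'x.
have [->|x_nz] := eqVneq x 0; first by rewrite wt0.
have [c /andP [C_c _] [->|->]] := ext_code_cases C'x x_nz;
  by rewrite wt_row_mx ?wt0 ?wt_const1 ?dvdn_add ?C4.
Qed.

End ExtensionConstruction.

Lemma dvdn4_exp2 k : (2 <= k)%N -> (4 %| 2 ^ k)%N.
Proof. exact: (@dvdn_exp2l 2 2 k). Qed.

Theorem proposition5p3 (m : nat) (hm : (3 <= m)%N)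
  (C : bcode (2 ^ (2 * m - 2) + 2 ^ (m - 1) - 1))
  (hdim : \dim C = (2 * m - 1)%N)
  (hw : forall w : nat,
     (exists2 v, (v \in C) && (v != 0) & wt v = w) <->
     w \in [:: 2 ^ (2 * m - 3); 2 ^ (2 * m - 3) + 2 ^ (m - 2);
               2 ^ (2 * m - 3) + 2 ^ (m - 1)]%N)
  (r : seq (bvec (2 ^ (2 * m - 2) + 2 ^ (m - 1) - 1)))
  (hbasis : basis_of C r)
  (hr1 : wt r`_0 = (2 ^ (2 * m - 3) + 2 ^ (m - 1))%N)
  (hr2 : wt r`_1 = (2 ^ (2 * m - 3))%N) :
  let C' := ext_code (2 * 2 ^ (2 * m - 3) - (2 ^ (2 * m - 3) + 2 ^ (m - 1)))%N r in
  ((2 * 2 ^ (2 * m - 3) - (2 ^ (2 * m - 3) + 2 ^ (m - 1))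
        + (2 ^ (2 * m - 2) + 2 ^ (m - 1) - 1) = 3 * 2 ^ (2 * m - 3) - 1)%N /\
      \dim C' = (2 * m - 1)%N /\
      wmin C' = (2 ^ (2 * m - 3))%N /\
      wmax C' = (2 ^ (2 * m - 2))%N /\
      minimal_code C' /\
      ~ ashikhmin_barg C' /\
      ((4 <= m)%N -> self_orthogonal C')).
Proof.
have le_exp : (2 ^ (m - 2) <= 2 ^ (m - 1))%N by rewrite leq_exp2l //; lia.
have lt_exp : (2 ^ (m - 1) < 2 ^ (2 * m - 3))%N by rewrite ltn_exp2l //; lia.
have exp_2m2 : (2 ^ (2 * m - 2) = 2 * 2 ^ (2 * m - 3))%N.
  by rewrite -expnS; congr (2 ^ _)%N; lia.
have wt_C c : c \in C -> c != 0 -> wt c \in [:: 2 ^ (2 * m - 3);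
    2 ^ (2 * m - 3) + 2 ^ (m - 2); 2 ^ (2 * m - 3) + 2 ^ (m - 1)]%N.
  by move=> C_c c_nz; apply/hw; exists c; rewrite ?C_c.
have size_r : size r = (2 * m - 1)%N.
  by rewrite -hdim -(span_basis hbasis) (eqP (basis_free hbasis)).
case: r size_r hbasis hr1 hr2 => [|r1 [|r2 rs]] size_r;
  try by exfalso; move: size_r => /=; lia.
move=> r_basis wt_r1 wt_r2 C'; rewrite {}/C'.
have wt_range c : c \in C -> c != 0 -> (wt r2 <= wt c <= wt r1)%N.
  by move=> C_c /(wt_C c C_c); rewrite wt_r1 wt_r2 !inE => /or3P [] /eqP ->; lia.
have n'_gt0 : (0 < 2 * 2 ^ (2 * m - 3) - (2 ^ (2 * m - 3) + 2 ^ (m - 1)))%N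
  by lia.
have n'E : (2 * 2 ^ (2 * m - 3) - (2 ^ (2 * m - 3) + 2 ^ (m - 1)) + wt r1
    = 2 * wt r2)%N by rewrite wt_r1 wt_r2; lia.
have wminE := wmin_ext_code r_basis wt_range n'_gt0 n'E.
have wmaxE := wmax_ext_code r_basis wt_range n'_gt0 n'E.
split; first lia.
split; first by rewrite (dim_ext_code r_basis n'_gt0).
split; first by rewrite wminE wt_r2.
split; first by rewrite wmaxE wt_r2 exp_2m2.
split; first exact: minimal_ext_code r_basis wt_range n'_gt0 n'E.
split; first by apply: not_ashikhmin_barg_wmax_double; rewrite wminE wmaxE.
move=> m_ge4.
apply: self_orthogonal_ext_code r_basis _ _.
  rewrite (_ : 2 * _ - _ = 2 ^ (2 * m - 3) - 2 ^ (m - 1))%N; last lia.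
  by rewrite dvdn_sub ?dvdn4_exp2 //; lia.
move=> c C_c; have [->|c_nz] := eqVneq c 0; first by rewrite wt0.
move/(wt_C c C_c): c_nz; rewrite !inE => /or3P [] /eqP ->;
  by rewrite ?dvdn_add ?dvdn4_exp2 //; lia.
Qed.
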